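(* Suppose $P_{II*}\subseteq P_{II}$ is a chain (totally ordered by inclusion). Then for filters $\Xi,\Upsilon\in P_{III*}$, $\mathcal C_{\Xi\text{-unc}}=\mathcal C_{\Upsilon\text{-unc}}$ if and only if $\Xi=\Upsilon$.
   Context: Let $n\ge1$, $L=\{1,\dots,n\}$, and for $i\in L$ let $\mathcal H_i$ be a Hilbert space with $1<\dim\mathcal H_i<\infty$; $\mathcal H_X=\bigotimes_{i\in X}\mathcal H_i$ and $\mathcal D_X$ is the set of density operators on $\mathcal H_X$. $P_I$ is the set of partitions of $L$ ordered by refinement. For $\xi\in P_I$, $\mathcal D_{\xi\text{-unc}}=\{\varrho\in\mathcal D_L:\varrho=\bigotimes_{X\in\xi}\varrho_X,\ \varrho_X\in\mathcal D_X\}$, and for $S\subseteq P_I$, $\mathcal D_{S\text{-unc}}=\bigcup_{\xi\in S}\mathcal D_{\xi\text{-unc}}$. $P_{II}$ is the set of nonempty down-sets of $P_I$, ordered by inclusion; $P_{II*}$ is a nonempty subset of $P_{II}$ and $P_{III*}$ is the set of nonempty up-sets of $P_{II*}$. For $\Xi\in P_{III*}$: $\overline\Xi=P_{II*}\setminus\Xi$ and $\mathcal C_{\Xi\text{-unc}}=\bigcap_{\boldsymbol\xi'\in\overline\Xi}(\mathcal D_L\setminus\mathcal D_{\boldsymbol\xi'\text{-unc}})\cap\bigcap_{\boldsymbol\xi\in\Xi}\mathcal D_{\boldsymbol\xi\text{-unc}}$. *)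

From HB Require Import structures.
From mathcomp Require Import all_boot all_order all_algebra.
Set Implicit Arguments. Unset Strict Implicit. Unset Printing Implicit Defensive.
Import Order.TTheory GRing.Theory Num.Theory.
Local Open Scope ring_scope.

(* Sites are 'I_n (i.e. L = {1..n} shifted to {0..n-1}); H_i = C^(d i).
   A basis vector of H_X is a configuration: a dependent function giving for
   each i in X an index in 'I_(d i). *)
Definition ConfX (n : nat) (d : 'I_n -> nat) (X : {set 'I_n}) : finType :=
  {dffun forall i : {i : 'I_n | i \in X}, 'I_(d (val i))}.

Definition Conf (n : nat) (d : 'I_n -> nat) : finType :=
  {dffun forall i : 'I_n, 'I_(d i)}.

Definition restr (n : nat) (d : 'I_n -> nat) (X : {set 'I_n}) (a : Conf d)
  : ConfX d X := finfun (fun i : {i : 'I_n | i \in X} => a (val i)).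

(* Density operator on C^T (operators given by their matrix entries):
   positive semidefinite and of unit trace. *)
Definition is_density (C : numClosedFieldType) (T : finType) (rho : T -> T -> C)
  : Prop :=
  (forall v : T -> C, 0 <= \sum_(a : T) \sum_(b : T) (v a)^* * rho a b * v b)
  /\ \sum_(a : T) rho a a = 1.

Definition refines (n : nat) (xi eta : {set {set 'I_n}}) : Prop :=
  forall X, X \in xi -> exists2 Y, Y \in eta & X \subset Y.

Definition D_unc (n : nat) (d : 'I_n -> nat) (C : numClosedFieldType)
  (xi : {set {set 'I_n}}) (rho : Conf d -> Conf d -> C) : Prop :=
  is_density rho /\
  exists f : forall X : {set 'I_n}, ConfX d X -> ConfX d X -> C,
    (forall X, X \in xi -> is_density (f X)) /\
    forall a b : Conf d,
      rho a b = \prod_(X in xi) f X (restr X a) (restr X b).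

Definition D_S_unc (n : nat) (d : 'I_n -> nat) (C : numClosedFieldType)
  (S : {set {set {set 'I_n}}}) (rho : Conf d -> Conf d -> C) : Prop :=
  exists2 xi, xi \in S & D_unc xi rho.

Definition is_PII (n : nat) (S : {set {set {set 'I_n}}}) : Prop :=
  S != set0 /\
  (forall xi, xi \in S -> partition xi [set: 'I_n]) /\
  (forall xi eta, xi \in S -> partition eta [set: 'I_n] -> refines eta xi ->
     eta \in S).

Definition is_PIIstar (n : nat) (PS : {set {set {set {set 'I_n}}}}) : Prop :=
  PS != set0 /\ (forall S, S \in PS -> is_PII S).

Definition is_chain (n : nat) (PS : {set {set {set {set 'I_n}}}}) : Prop :=
  forall S T, S \in PS -> T \in PS -> S \subset T \/ T \subset S.

Definition is_PIIIstar (n : nat) (PS Xi : {set {set {set {set 'I_n}}}}) : Prop :=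
  Xi != set0 /\ Xi \subset PS /\
  (forall S T, S \in Xi -> T \in PS -> S \subset T -> T \in Xi).

Definition C_unc (n : nat) (d : 'I_n -> nat) (C : numClosedFieldType)
  (PS Xi : {set {set {set {set 'I_n}}}}) (rho : Conf d -> Conf d -> C) : Prop :=
  is_density rho /\
  (forall S', S' \in PS -> S' \notin Xi -> ~ D_S_unc S' rho) /\
  (forall S, S \in Xi -> D_S_unc S rho).

From HB Require Import structures.
From mathcomp Require Import all_boot all_order all_algebra.
Import Order.TTheory GRing.Theory Num.Theory.
Local Open Scope ring_scope.

(* In a chain, an up-set Xi is cut out by a single partition xi: if M is the
   smallest member of Xi and Sm the largest member of P_II* outside Xi, any
   xi in M but not in Sm lies in exactly the members of Xi.  For such xi take
   the diagonal "cat" state which on every block X of xi is the classical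
   mixture (|0..0><0..0| + |1..1><1..1|)/2.  It is xi-uncorrelated, and it is
   eta-uncorrelated only if xi refines eta: for a block Y of eta, the product
   form forces rho(X∩Y) rho(X\Y) = rho(∅) rho(X) on the diagonal at indicator
   configurations, and the right-hand side is nonzero, so X∩Y is ∅ or X.
   Hence this state lies in C_{Xi-unc}, and C_{Xi-unc} ⊆ C_{Ups-unc} forces
   Xi ⊆ Ups. *)

Section Chain.
Context {T : finType} {PS : {set {set T}}}.
Hypothesis chainPS : forall S S', S \in PS -> S' \in PS ->
  S \subset S' \/ S' \subset S.

Lemma chain_subset_card S S' :
  S \in PS -> S' \in PS -> (#|S| <= #|S'|)%N -> S \subset S'.
Proof.
move=> PSS PSS' le_SS'; have [//|sub_S'S] := chainPS _ _ PSS PSS'.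
by have /eqP -> : S' == S by rewrite eqEcard sub_S'S.
Qed.

Lemma chain_upset_separator {Xi : {set {set T}}} :
  (forall S, S \in PS -> S != set0) -> Xi != set0 -> Xi \subset PS ->
  (forall S S', S \in Xi -> S' \in PS -> S \subset S' -> S' \in Xi) ->
  exists x, forall S, S \in PS -> (x \in S) = (S \in Xi).
Proof.
move=> PS_neq0 /set0Pn [S0 XiS0] sub_Xi up_Xi.
have [M XiM minM] := arg_minnP (fun S : {set T} => #|S|) XiS0.
have PSM := subsetP sub_Xi M XiM.
have sub_M S : S \in Xi -> M \subset S.
  by move=> XiS; apply: chain_subset_card (minM S XiS) => //; apply: subsetP XiS.
case: (set0Pn (PS :\: Xi)) => [[S1 S1out] | no_out].
- have [Sm Smout maxSm] := arg_maxnP (fun S : {set T} => #|S|) S1out.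
  move: (Smout) => /setDP [PSSm XiSm].
  have /subsetPn [x Mx Smx] : ~~ (M \subset Sm).
    exact: contra (up_Xi M Sm XiM PSSm) XiSm.
  exists x => S PSS; apply/idP/idP => [Sx | XiS]; last exact: subsetP (sub_M S XiS) x Mx.
  apply: contraTT Sx => XiS; apply: contra Smx; apply: subsetP.
  by apply: chain_subset_card => //; apply: maxSm; apply/setDP.
- have /set0Pn [x Mx] := PS_neq0 M PSM.
  exists x => S PSS; have XiS : S \in Xi.
    by apply: contraT => XiS; case: no_out; exists S; rewrite inE XiS.
  by rewrite XiS (subsetP (sub_M S XiS)).
Qed.

End Chain.

Definition diag_op {R : nmodType} {T : eqType} (w : T -> R) (a b : T) : R :=
  if a == b then w a else 0.

Lemma diag_op_density (C : numClosedFieldType) (T : finType) (w : T -> C) :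
  (forall a, 0 <= w a) -> \sum_a w a = 1 -> is_density (diag_op w).
Proof.
move=> w_ge0 sum_w; split; last first.
  by rewrite -sum_w; apply: eq_bigr => a _; rewrite /diag_op eqxx.
move=> v; apply: sumr_ge0 => a _.
rewrite (bigD1 a) //= big1 ?addr0 => [|b ba]; last first.
  by rewrite /diag_op eq_sym (negbTE ba) mulr0 mul0r.
by rewrite /diag_op eqxx mulrC mulrA mulr_ge0 ?mul_conjC_ge0.
Qed.

Lemma restr_partition_inj {n : nat} {d : 'I_n -> nat} {xi : {set {set 'I_n}}}
    {a b : Conf d} :
  partition xi [set: 'I_n] -> (forall X, X \in xi -> restr X a = restr X b) ->
  a = b.
Proof.
move=> /and3P [/eqP cov_xi _ _] eq_ab; apply/ffunP => i.
have covi : i \in cover xi by rewrite cov_xi inE.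
move/ffunP: (eq_ab _ (pblock_mem covi)).
by move=> /(_ (exist _ i (etrans (mem_pblock _ _) covi))); rewrite !ffunE.
Qed.

Section Extension.
Context {n : nat} {d : 'I_n -> nat} (z : Conf d).

Definition extend_at {X} (u : ConfX d X) (i : 'I_n) : 'I_(d i) :=
  match (i \in X) as b return (i \in X) = b -> 'I_(d i) with
  | true => fun Xi =>
      (u : {dffun forall k : {k : 'I_n | k \in X}, 'I_(d (val k))}) (exist _ i Xi)
  | false => fun _ => z i
  end (erefl _).

Definition extend {X} (u : ConfX d X) : Conf d := [ffun i => extend_at u i].

Lemma extend_in {X} (u : ConfX d X) {i} (Xi : i \in X) :
  extend u i = (u : {dffun forall k : {k : 'I_n | k \in X}, 'I_(d (val k))})
                 (exist _ i Xi).
Proof.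
rewrite ffunE /extend_at; move: (erefl (i \in X)).
case: {2 3}(i \in X) => e; first by rewrite (bool_irrelevance e Xi).
by rewrite Xi in e.
Qed.

Lemma extend_out X (u : ConfX d X) i : i \notin X -> extend u i = z i.
Proof.
move=> Xi; rewrite ffunE /extend_at; move: (erefl (i \in X)).
by case: {2 3}(i \in X) => e //; rewrite e in Xi.
Qed.

Lemma restr_extend X (u : ConfX d X) : restr X (extend u) = u.
Proof. by apply/ffunP => -[i Xi]; rewrite ffunE /= (extend_in u Xi). Qed.

Definition agree_off (X : {set 'I_n}) : pred (Conf d) :=
  fun a => [forall i, (i \notin X) ==> (a i == z i)].

Lemma sum_ConfX_restr (R : nmodType) X (F : ConfX d X -> R) :
  \sum_(u : ConfX d X) F u = \sum_(a | agree_off X a) F (restr X a).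
Proof.
rewrite (reindex_onto (@extend X) (@restr _ d X)) /=; last first.
  move=> a /forallP agree_a; apply/ffunP => i.
  case Xi: (i \in X); first by rewrite (extend_in _ Xi) ffunE.
  by rewrite extend_out ?Xi //; move/implyP: (agree_a i); rewrite Xi => /(_ isT)/eqP.
apply: eq_big => u; last by rewrite restr_extend.
rewrite restr_extend eqxx andbT; apply/esym/forallP => i.
by apply/implyP => Xi; rewrite extend_out.
Qed.

Context {xi : {set {set 'I_n}}}.
Hypothesis xi_part : partition xi [set: 'I_n].

Definition pad (X : {set 'I_n}) (a : Conf d) : Conf d :=
  [ffun i => if i \in X then a i else z i].

Let split_blocks (a : Conf d) : {ffun {set 'I_n} -> Conf d} :=
  [ffun X => if X \in xi then pad X a else z].

Let glue_blocks (f : {ffun {set 'I_n} -> Conf d}) : Conf d :=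
  [ffun i => f (pblock xi i) i].

Lemma restr_pad X a : restr X (pad X a) = restr X a.
Proof. by apply/ffunP => -[i Xi]; rewrite !ffunE /= Xi. Qed.

Lemma sum_prod_restr {R : comPzSemiRingType} (F : forall X, ConfX d X -> R) :
  \sum_(a : Conf d) \prod_(X in xi) F X (restr X a) =
  \prod_(X in xi) \sum_(u : ConfX d X) F X u.
Proof.
case/and3P: xi_part => /eqP cov_xi triv_xi _.
have cov i : i \in cover xi by rewrite cov_xi inE.
under [RHS]eq_bigr => X _ do rewrite sum_ConfX_restr.
rewrite (big_distr_big_dep z) (reindex_onto split_blocks glue_blocks) /=.
  apply: eq_big => a; last first.
    by move=> _; apply: eq_bigr => X xiX; rewrite ffunE xiX restr_pad.
  rewrite [RHS]/=; symmetry; apply/andP; split.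
    apply/pfamilyP; split.
      by apply/subsetP => X; rewrite inE ffunE; case: (X \in xi); rewrite ?eqxx.
    move=> X xiX; rewrite ffunE xiX; apply/forallP => i; apply/implyP => Xi.
    by rewrite ffunE (negbTE Xi).
  apply/eqP/ffunP => i; rewrite !ffunE (pblock_mem (cov i)) ffunE.
  by rewrite mem_pblock cov.
move=> f /pfamilyP [supp_f agree_f]; apply/ffunP => X; rewrite ffunE.
case xiX: (X \in xi); last first.
  by apply/esym/eqP; apply: contraFT xiX => fX; apply: (subsetP supp_f); rewrite inE.
apply/ffunP => i; rewrite ffunE.
case Xi: (i \in X); first by rewrite ffunE (def_pblock triv_xi xiX Xi).
by move/forallP: (agree_f X xiX) => /(_ i); rewrite Xi => /eqP.
Qed.

End Extension.

Lemma diag_op_prod_restr {n : nat} {d : 'I_n -> nat} {R : comPzSemiRingType}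
    {xi : {set {set 'I_n}}} (w : forall X, ConfX d X -> R) (a b : Conf d) :
  partition xi [set: 'I_n] ->
  diag_op (fun c => \prod_(X in xi) w X (restr X c)) a b =
  \prod_(X in xi) diag_op (w X) (restr X a) (restr X b).
Proof.
move=> xi_part; rewrite /diag_op; case: eqP => [<- | neq_ab].
  by apply: eq_bigr => X _; rewrite eqxx.
have /exists_inP [X xiX neqX] : [exists X in xi, restr X a != restr X b].
  apply: contraT; rewrite negb_exists_in => /forall_inP eqX.
  by case: neq_ab; apply: (restr_partition_inj xi_part) => X /eqX /negPn /eqP.
by rewrite (bigD1 X) //= (negbTE neqX) mul0r.
Qed.

Section CatState.
Context {n : nat} {d : 'I_n -> nat} {C : numClosedFieldType}.
Hypothesis d_gt1 : forall i, (1 < d i)%N.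

(* The indicator configuration of S: value 1 on S and 0 off S. *)
Definition cfg (S : {set 'I_n}) : Conf d :=
  [ffun k => if k \in S then Ordinal (d_gt1 k) else Ordinal (ltnW (d_gt1 k))].

Lemma restr_cfgE X S S' :
  (restr X (cfg S) == restr X (cfg S')) = (X :&: S == X :&: S').
Proof.
apply/eqP/eqP => [/ffunP eqSS' | eqSS'].
  apply/setP => k; rewrite !inE; case Xk: (k \in X) => //=.
  move: (eqSS' (exist _ k Xk)); rewrite !ffunE /=.
  by case: (k \in S); case: (k \in S') => // /(congr1 val).
apply/ffunP => -[k Xk]; rewrite !ffunE /=.
by move/setP: eqSS' => /(_ k); rewrite !inE Xk /= => ->.
Qed.

Definition cat_weight {X} (u : ConfX d X) : C :=
  2^-1 * ((u == restr X (cfg set0))%:R + (u == restr X (cfg setT))%:R).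

Lemma cat_weight_ge0 X (u : ConfX d X) : 0 <= cat_weight u.
Proof. by rewrite mulr_ge0 ?invr_ge0 ?addr_ge0 ?ler0n. Qed.

Lemma sum_cat_weight X : \sum_(u : ConfX d X) cat_weight u = 1.
Proof.
have sum_eq c : \sum_(u : ConfX d X) ((u == c)%:R : C) = 1.
  by rewrite (bigD1 c) //= eqxx big1 ?addr0 // => u /negbTE ->.
by rewrite -big_distrr big_split /= !sum_eq mulVf // pnatr_eq0.
Qed.

Lemma cat_weight_cfg_eq0 X S :
  (cat_weight (restr X (cfg S)) == 0) = (X :&: S != set0) && (X :&: S != X).
Proof.
rewrite /cat_weight !restr_cfgE setI0 setIT mulf_eq0 invr_eq0 pnatr_eq0 /=.
by rewrite -natrD pnatr_eq0 addn_eq0 !eqb0.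
Qed.

Definition cat_state (xi : {set {set 'I_n}}) : Conf d -> Conf d -> C :=
  diag_op (fun a => \prod_(X in xi) cat_weight (restr X a)).

Variable xi : {set {set 'I_n}}.
Hypothesis xi_part : partition xi [set: 'I_n].

Lemma cat_state_density : is_density (cat_state xi).
Proof.
apply: diag_op_density => [a | ]; first by apply: prodr_ge0 => X _; apply: cat_weight_ge0.
rewrite (sum_prod_restr (cfg set0) xi_part (fun X u => cat_weight u)).
by rewrite big1 // => X _; apply: sum_cat_weight.
Qed.

Lemma cat_state_unc : D_unc xi (cat_state xi).
Proof.
split; first exact: cat_state_density.
exists (fun X => diag_op (@cat_weight X)); split => [X _ | a b].
  by apply: diag_op_density => [u|]; [apply: cat_weight_ge0 | apply: sum_cat_weight].
exact: diag_op_prod_restr.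
Qed.

Lemma cat_state_cfg_eq0 S :
  (cat_state xi (cfg S) (cfg S) == 0) =
  [exists X in xi, (X :&: S != set0) && (X :&: S != X)].
Proof.
rewrite /cat_state /diag_op eqxx; apply/prodf_eq0/exists_inP.
  by case=> X xiX; rewrite cat_weight_cfg_eq0; exists X.
by case=> X xiX; rewrite -cat_weight_cfg_eq0; exists X.
Qed.

(* Blockwise, the pair (S ∩ Y, S \ Y) is (S, ∅) on Y and (∅, S) off Y. *)
Lemma D_unc_cfg_exchange {eta : {set {set 'I_n}}} {rho : Conf d -> Conf d -> C}
    {Y} S :
  trivIset eta -> Y \in eta -> D_unc eta rho ->
  rho (cfg (S :&: Y)) (cfg (S :&: Y)) * rho (cfg (S :\: Y)) (cfg (S :\: Y)) =
  rho (cfg set0) (cfg set0) * rho (cfg S) (cfg S).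
Proof.
move=> triv_eta etaY [_ [f [_ rhoE]]].
have restr_cfg_eq Y' S1 S2 :
    Y' :&: S1 = Y' :&: S2 -> restr Y' (cfg S1) = restr Y' (cfg S2).
  by move=> eqS; apply/eqP; rewrite restr_cfgE eqS.
rewrite !rhoE -!big_split /=; apply: eq_bigr => Y' etaY'.
have [-> | neqY] := eqVneq Y' Y.
  rewrite (restr_cfg_eq Y (S :&: Y) S) ?(restr_cfg_eq Y (S :\: Y) set0) 1?mulrC //.
    by apply/setP => k; rewrite !inE; case: (k \in Y).
  by apply/setP => k; rewrite !inE; case: (k \in Y); case: (k \in S).
have disY : [disjoint Y' & Y] by apply: (trivIsetP triv_eta).
rewrite (restr_cfg_eq Y' (S :&: Y) set0) ?(restr_cfg_eq Y' (S :\: Y) S) //.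
  by apply/setP => k; rewrite !inE; case Y'k: (k \in Y'); rewrite ?(disjointFr disY Y'k).
apply/setP => k; rewrite !inE.
by case Y'k: (k \in Y'); rewrite ?(disjointFr disY Y'k) ?andbF.
Qed.

Lemma cat_state_unc_refines (eta : {set {set 'I_n}}) :
  partition eta [set: 'I_n] -> D_unc eta (cat_state xi) -> refines xi eta.
Proof.
move=> /and3P [/eqP cov_eta triv_eta _] unc_eta X xiX.
case/and3P: xi_part => _ triv_xi xi_no0.
have /set0Pn [i Xi] : X != set0 by apply: contraNneq xi_no0 => <-.
have cov_i : i \in cover eta by rewrite cov_eta inE.
set Y := pblock eta i; have etaY : Y \in eta by apply: pblock_mem.
exists Y => //; apply: contraT => notXY.
have := D_unc_cfg_exchange X triv_eta etaY unc_eta.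
have /eqP -> : cat_state xi (cfg (X :&: Y)) (cfg (X :&: Y)) == 0.
  rewrite cat_state_cfg_eq0; apply/exists_inP; exists X => //.
  rewrite setIA setIid; apply/andP; split.
    by apply/set0Pn; exists i; rewrite inE Xi mem_pblock cov_i.
  by apply: contra notXY => /eqP <-; apply: subsetIr.
rewrite mul0r => /esym /eqP; rewrite mulf_eq0 !cat_state_cfg_eq0.
case/orP=> /exists_inP [X' xiX']; first by rewrite setI0 eqxx.
have [-> | neqX] := eqVneq X' X; first by rewrite setIid eqxx andbF.
by rewrite (disjoint_setI0 (trivIsetP triv_xi _ _ xiX' xiX neqX)) eqxx.
Qed.

Lemma cat_state_C_unc (PS Xi : {set {set {set {set 'I_n}}}}) :
  (forall S, S \in PS -> is_PII S) -> Xi \subset PS ->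
  (forall S, S \in PS -> (xi \in S) = (S \in Xi)) ->
  C_unc PS Xi (cat_state xi).
Proof.
move=> PII sub_Xi sepXi; split; first exact: cat_state_density.
split=> [S PSS notXiS [eta Seta unc_eta] | S XiS].
  have [_ [Spart Sdown]] := PII S PSS.
  have := Sdown eta xi Seta xi_part (cat_state_unc_refines _ (Spart _ Seta) unc_eta).
  by rewrite sepXi // (negbTE notXiS).
by exists xi; [rewrite sepXi // (subsetP sub_Xi) | apply: cat_state_unc].
Qed.

End CatState.

Lemma C_unc_exists {n : nat} {d : 'I_n -> nat} (d_gt1 : forall i, (1 < d i)%N)
    (C : numClosedFieldType) {PS Xi : {set {set {set {set 'I_n}}}}} :
  is_PIIstar PS -> is_chain PS -> is_PIIIstar PS Xi ->
  exists rho : Conf d -> Conf d -> C, C_unc PS Xi rho.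
Proof.
move=> [_ PII] chainPS [Xi_neq0 [sub_Xi up_Xi]].
have PS_neq0 S : S \in PS -> S != set0 by case/PII.
have [xi sepXi] := chain_upset_separator chainPS PS_neq0 Xi_neq0 sub_Xi up_Xi.
have /set0Pn [S XiS] := Xi_neq0; have PSS := subsetP sub_Xi S XiS.
have xi_part : partition xi [set: 'I_n].
  by have [_ [Spart _]] := PII S PSS; apply: Spart; rewrite sepXi.
by exists (cat_state d_gt1 xi); apply: cat_state_C_unc.
Qed.

Lemma C_unc_subset {n : nat} {d : 'I_n -> nat} (d_gt1 : forall i, (1 < d i)%N)
    {C : numClosedFieldType} {PS Xi Ups : {set {set {set {set 'I_n}}}}} :
  is_PIIstar PS -> is_chain PS -> is_PIIIstar PS Xi ->
  (forall rho : Conf d -> Conf d -> C, C_unc PS Xi rho -> C_unc PS Ups rho) ->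
  Xi \subset Ups.
Proof.
move=> PS_II chainPS Xi_III sub_C; apply/subsetP => S XiS.
have [rho rhoXi] := C_unc_exists d_gt1 C PS_II chainPS Xi_III.
have [_ [notUps _]] := sub_C rho rhoXi.
apply/negPn/negP => UpsS; apply: (notUps S _ UpsS (rhoXi.2.2 S XiS)).
by case: Xi_III => _ [sub_Xi _]; apply: (subsetP sub_Xi).
Qed.

Theorem proposition6 (n : nat) (Hn : (1 <= n)%N) (d : 'I_n -> nat)
  (Hd : forall i, (1 < d i)%N) (C : numClosedFieldType)
  (PS : {set {set {set {set 'I_n}}}})
  (HPS : is_PIIstar PS) (Hchain : is_chain PS)
  (Xi Ups : {set {set {set {set 'I_n}}}})
  (HXi : is_PIIIstar PS Xi) (HUps : is_PIIIstar PS Ups) :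
  (forall rho : Conf d -> Conf d -> C, C_unc PS Xi rho <-> C_unc PS Ups rho)
  <-> Xi = Ups.
Proof.
split=> [eqC | -> //]; apply/eqP; rewrite eqEsubset.
apply/andP; split.
  by apply: (C_unc_subset Hd HPS Hchain HXi) => rho /eqC.
by apply: (C_unc_subset Hd HPS Hchain HUps) => rho /eqC.
Qed.
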